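(* Let $a\in C^1([0,T]\times[-\pi,\pi])$ solve $$\partial_t a+\Big(\int_{-\pi}^x a(t,\bar x)\,d\bar x\Big)\partial_x a-a^2+\frac1\pi\int_{-\pi}^{\pi}a^2\,dx=0,\qquad \int_{-\pi}^\pi a(t,x)dx=0.$$ Assume $x\mapsto a(0,x)$ attains its maximum at $x_0^*$. Then for all $t\in[0,T]$, $x\mapsto a(t,x)$ attains its maximum at $x^*(t)$, where $x^*$ is the characteristic starting from $x_0^*$.
   Context: The characteristic starting from $x_0^*$ is the solution of $\frac{d}{dt}x^*(t)=\int_{-\pi}^{x^*(t)}a(t,x)\,dx$, $x^*(0)=x_0^*$. *)

From Stdlib Require Import Reals.
From Coquelicot Require Import Coquelicot.
Open Scope R_scope.

Definition Icc (lo hi : R) (x : R) : Prop := lo <= x <= hi.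

(* f has derivative l at x, relative to the set D (one-sided at endpoints
   of a closed interval). *)
Definition has_deriv_within (D : R -> Prop) (f : R -> R) (x l : R) : Prop :=
  forall eps : R, 0 < eps -> exists delta : R, 0 < delta /\
    forall y : R, D y -> Rabs (y - x) < delta ->
      Rabs (f y - f x - l * (y - x)) <= eps * Rabs (y - x).

Definition cont_on_rect (t0 t1 x0 x1 : R) (g : R -> R -> R) : Prop :=
  forall t x, Icc t0 t1 t -> Icc x0 x1 x ->
  forall eps : R, 0 < eps -> exists delta : R, 0 < delta /\
    forall s y, Icc t0 t1 s -> Icc x0 x1 y ->
      Rabs (s - t) < delta -> Rabs (y - x) < delta ->
      Rabs (g s y - g t x) < eps.

Definition C1_rect_with (t0 t1 x0 x1 : R) (a at_ ax : R -> R -> R) : Prop :=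
  cont_on_rect t0 t1 x0 x1 at_ /\ cont_on_rect t0 t1 x0 x1 ax /\
  (forall t x, Icc t0 t1 t -> Icc x0 x1 x ->
     has_deriv_within (Icc t0 t1) (fun s => a s x) t (at_ t x) /\
     has_deriv_within (Icc x0 x1) (fun y => a t y) x (ax t x)).

(* Along the characteristic, u(t) = a(t, x*(t)) satisfies u' = u^2 - I(t) with
   I(t) = (1/pi) * int a^2, because x*' is exactly the transport coefficient.
   At a maximum point of a(t, .) the transport term vanishes as well (a_x = 0
   in the interior, int_{-pi}^x a = 0 at both endpoints by the zero mean), so
   a_t = a^2 - I there.  Compare a with u + eps * exp (K (t - T)): at a first
   touching time the gap would have negative time derivative although it has
   just reached 0 from below; letting eps -> 0 gives a <= u. *)

From Stdlib Require Import Reals Lra IndefiniteDescription Classical.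
From Coquelicot Require Import Coquelicot.
Open Scope R_scope.

Definition cont_within (D : R -> Prop) (f : R -> R) (x : R) : Prop :=
  forall eps : R, 0 < eps -> exists delta : R, 0 < delta /\
    forall y : R, D y -> Rabs (y - x) < delta -> Rabs (f y - f x) < eps.

Lemma has_deriv_within_cont D f x l :
  has_deriv_within D f x l -> cont_within D f x.
Proof.
intros Hf eps Heps.
destruct (Hf 1 Rlt_0_1) as [d [Hd Hclose]].
assert (Hl : 0 < Rabs l + 1) by (pose proof (Rabs_pos l); lra).
exists (Rmin d (eps / (Rabs l + 1))); split.
{ apply Rmin_pos; [lra | apply Rdiv_lt_0_compat; lra]. }
intros y Dy Hyx. apply Rmin_Rgt in Hyx as [Hyd Hyeps].
assert (Hsmall : (Rabs l + 1) * Rabs (y - x) < eps).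
{ replace eps with ((Rabs l + 1) * (eps / (Rabs l + 1))) by (field; lra).
  apply Rmult_lt_compat_l; lra. }
specialize (Hclose y Dy Hyd).
replace (f y - f x) with ((f y - f x - l * (y - x)) + l * (y - x)) by ring.
eapply Rle_lt_trans; [apply Rabs_triang |]. rewrite Rabs_mult. lra.
Qed.

Lemma has_deriv_within_ext D f g x l :
  D x -> (forall y, D y -> f y = g y) ->
  has_deriv_within D f x l -> has_deriv_within D g x l.
Proof.
intros Dx Hfg Hf eps Heps. destruct (Hf eps Heps) as [d [Hd Hclose]].
exists d; split; [exact Hd |]. intros y Dy Hyx.
rewrite <- (Hfg y Dy), <- (Hfg x Dx). auto.
Qed.

Lemma has_deriv_within_plus D f g x l1 l2 :
  has_deriv_within D f x l1 -> has_deriv_within D g x l2 ->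
  has_deriv_within D (fun y => f y + g y) x (l1 + l2).
Proof.
intros Hf Hg eps Heps.
destruct (Hf (eps / 2)) as [d1 [Hd1 Hf1]]; [lra |].
destruct (Hg (eps / 2)) as [d2 [Hd2 Hg2]]; [lra |].
exists (Rmin d1 d2); split; [apply Rmin_pos; lra |].
intros y Dy Hyx. apply Rmin_Rgt in Hyx as [Hy1 Hy2].
specialize (Hf1 y Dy Hy1). specialize (Hg2 y Dy Hy2).
replace (f y + g y - (f x + g x) - (l1 + l2) * (y - x))
  with ((f y - f x - l1 * (y - x)) + (g y - g x - l2 * (y - x))) by ring.
eapply Rle_trans; [apply Rabs_triang | lra].
Qed.

Lemma has_deriv_within_opp D f x l :
  has_deriv_within D f x l -> has_deriv_within D (fun y => - f y) x (- l).
Proof.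
intros Hf eps Heps. destruct (Hf eps Heps) as [d [Hd Hclose]].
exists d; split; [exact Hd |]. intros y Dy Hyx.
replace (- f y - - f x - - l * (y - x)) with (- (f y - f x - l * (y - x))) by ring.
rewrite Rabs_Ropp. auto.
Qed.

Lemma has_deriv_within_minus D f g x l1 l2 :
  has_deriv_within D f x l1 -> has_deriv_within D g x l2 ->
  has_deriv_within D (fun y => f y - g y) x (l1 - l2).
Proof.
intros Hf Hg. exact (has_deriv_within_plus D f _ x l1 _ Hf (has_deriv_within_opp D g x l2 Hg)).
Qed.

Lemma has_deriv_within_comp Dx Dy f X t B L :
  (forall s, Dx s -> Dy (X s)) ->
  has_deriv_within Dy f (X t) B -> has_deriv_within Dx X t L ->
  has_deriv_within Dx (fun s => f (X s)) t (B * L).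
Proof.
intros HX Hf HL eps Heps.
assert (HB : 0 < Rabs B + 1) by (pose proof (Rabs_pos B); lra).
assert (HLp : 0 < Rabs L + 1) by (pose proof (Rabs_pos L); lra).
destruct (Hf (eps / (2 * (Rabs L + 1)))) as [d1 [Hd1 Hf1]].
{ apply Rdiv_lt_0_compat; lra. }
destruct (has_deriv_within_cont _ _ _ _ HL d1 Hd1) as [d2 [Hd2 HX2]].
destruct (HL (eps / (2 * (Rabs B + 1)))) as [d3 [Hd3 HL3]].
{ apply Rdiv_lt_0_compat; lra. }
destruct (HL 1 Rlt_0_1) as [d4 [Hd4 HL4]].
exists (Rmin d2 (Rmin d3 d4)); split; [repeat apply Rmin_pos; lra |].
intros s Ds Hst. apply Rmin_Rgt in Hst as [Hs2 Hst]. apply Rmin_Rgt in Hst as [Hs3 Hs4].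
set (h := s - t). set (k := X s - X t).
assert (Hk_lin : Rabs (k - L * h) <= eps / (2 * (Rabs B + 1)) * Rabs h) by exact (HL3 s Ds Hs3).
assert (Hk : Rabs k <= (Rabs L + 1) * Rabs h).
{ specialize (HL4 s Ds Hs4). fold h k in HL4.
  replace k with ((k - L * h) + L * h) by ring.
  eapply Rle_trans; [apply Rabs_triang |]. rewrite Rabs_mult. lra. }
assert (Hf_lin : Rabs (f (X s) - f (X t) - B * k) <= eps / 2 * Rabs h).
{ eapply Rle_trans; [exact (Hf1 (X s) (HX s Ds) (HX2 s Ds Hs2)) |].
  fold k. apply Rle_trans with (eps / (2 * (Rabs L + 1)) * ((Rabs L + 1) * Rabs h)).
  - apply Rmult_le_compat_l; [left; apply Rdiv_lt_0_compat; lra | exact Hk].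
  - right. field. lra. }
assert (HB_lin : Rabs B * Rabs (k - L * h) <= eps / 2 * Rabs h).
{ apply Rle_trans with (Rabs B * (eps / (2 * (Rabs B + 1)) * Rabs h)).
  - apply Rmult_le_compat_l; [apply Rabs_pos | exact Hk_lin].
  - rewrite <- Rmult_assoc. apply Rmult_le_compat_r; [apply Rabs_pos |].
    apply Rle_trans with ((Rabs B + 1) * (eps / (2 * (Rabs B + 1)))).
    + apply Rmult_le_compat_r; [left; apply Rdiv_lt_0_compat |]; lra.
    + right. field. lra. }
replace (f (X s) - f (X t) - B * L * h)
  with ((f (X s) - f (X t) - B * k) + B * (k - L * h)) by (unfold k; ring).
eapply Rle_trans; [apply Rabs_triang |]. rewrite Rabs_mult. lra.
Qed.

Lemma has_deriv_within_of_derivable_pt_lim D f x l :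
  derivable_pt_lim f x l -> has_deriv_within D f x l.
Proof.
intros Hf eps Heps. destruct (Hf eps Heps) as [d Hd].
exists d; split; [apply cond_pos |]. intros y _ Hyx.
destruct (Req_dec y x) as [-> | Hne].
{ replace (f x - f x - l * (x - x)) with 0 by ring. rewrite Rminus_diag, Rabs_R0. lra. }
specialize (Hd (y - x) ltac:(lra) Hyx). replace (x + (y - x)) with y in Hd by ring.
replace (f y - f x - l * (y - x)) with ((y - x) * ((f y - f x) / (y - x) - l))
  by (field; lra).
rewrite Rabs_mult, Rmult_comm. apply Rmult_le_compat_r; [apply Rabs_pos | lra].
Qed.

Lemma derivable_pt_lim_of_within_interior lo hi f x l :
  lo < x < hi -> has_deriv_within (Icc lo hi) f x l -> derivable_pt_lim f x l.
Proof.
intros Hx Hf eps Heps. destruct (Hf (eps / 2)) as [d [Hd Hclose]]; [lra |].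
assert (Hm : 0 < Rmin d (Rmin (x - lo) (hi - x))) by (repeat apply Rmin_pos; lra).
exists (mkposreal _ Hm). intros h Hh0 Hh. simpl in Hh.
apply Rmin_Rgt in Hh as [Hhd Hh]. apply Rmin_Rgt in Hh as [Hlo Hhi].
assert (Hin : Icc lo hi (x + h)).
{ unfold Icc. destruct (Rabs_def2 _ _ Hlo). destruct (Rabs_def2 _ _ Hhi). lra. }
specialize (Hclose (x + h) Hin). replace (x + h - x) with h in Hclose by ring.
specialize (Hclose Hhd).
replace ((f (x + h) - f x) / h - l) with ((f (x + h) - f x - l * h) / h) by (field; auto).
unfold Rdiv. rewrite Rabs_mult, Rabs_inv.
assert (Hhp : 0 < Rabs h) by (apply Rabs_pos_lt; auto).
apply Rle_lt_trans with (eps / 2); [| lra].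
apply Rmult_le_reg_r with (Rabs h); [exact Hhp |].
rewrite Rmult_assoc, Rinv_l; lra.
Qed.

Lemma deriv_eq0_at_interior_max lo hi f x l :
  lo < x < hi -> has_deriv_within (Icc lo hi) f x l ->
  (forall y, Icc lo hi y -> f y <= f x) -> l = 0.
Proof.
intros Hx Hf Hmax.
pose proof (derivable_pt_lim_of_within_interior _ _ _ _ _ Hx Hf) as Hl.
apply (deriv_maximum f lo hi x (exist _ l Hl)); try lra.
intros y Hy1 Hy2. apply Hmax. unfold Icc. lra.
Qed.

Lemma deriv_ge0_at_left_max lo hi g t l :
  lo < t <= hi -> has_deriv_within (Icc lo hi) g t l ->
  (forall r, lo <= r < t -> g r <= g t) -> 0 <= l.
Proof.
intros Ht Hg Hmax. apply Rnot_lt_le. intros Hl.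
destruct (Hg (- l / 2)) as [d [Hd Hclose]]; [lra |].
set (r := Rmax lo (t - d / 2)).
assert (Hr : lo <= r /\ t - d / 2 <= r /\ r < t).
{ unfold r. repeat split; [apply Rmax_l | apply Rmax_r | apply Rmax_lub_lt; lra]. }
assert (Hrt : Rabs (r - t) = t - r) by (rewrite Rabs_left; lra).
specialize (Hclose r ltac:(unfold Icc; lra) ltac:(rewrite Hrt; lra)).
rewrite Hrt in Hclose. specialize (Hmax r ltac:(lra)).
assert (Hlow : - (g r - g t - l * (r - t)) <= - l / 2 * (t - r)).
{ eapply Rle_trans; [apply Rle_abs | rewrite Rabs_Ropp; exact Hclose]. }
assert (0 < (t - r) * (- l / 2)) by (apply Rmult_lt_0_compat; lra).
nra.
Qed.

Definition clamp (lo hi y : R) : R :=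
  if Rle_dec y lo then lo else if Rle_dec hi y then hi else y.

Lemma clamp_in lo hi y : lo <= hi -> Icc lo hi (clamp lo hi y).
Proof.
unfold clamp, Icc. intros. destruct (Rle_dec y lo); [lra |]. destruct (Rle_dec hi y); lra.
Qed.

Lemma clamp_id lo hi y : Icc lo hi y -> clamp lo hi y = y.
Proof.
unfold clamp, Icc. intros. destruct (Rle_dec y lo); [lra |]. destruct (Rle_dec hi y); lra.
Qed.

Lemma clamp_lipschitz lo hi x y :
  lo <= hi -> Rabs (clamp lo hi y - clamp lo hi x) <= Rabs (y - x).
Proof.
unfold clamp. intros.
destruct (Rle_dec y lo); [| destruct (Rle_dec hi y)];
  (destruct (Rle_dec x lo); [| destruct (Rle_dec hi x)]);
  unfold Rabs; repeat destruct Rcase_abs; lra.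
Qed.

Lemma continuity_pt_clamp lo hi f x :
  lo <= hi -> (forall y, Icc lo hi y -> cont_within (Icc lo hi) f y) ->
  continuity_pt (fun y => f (clamp lo hi y)) x.
Proof.
intros Hlh Hf eps Heps.
destruct (Hf _ (clamp_in lo hi x Hlh) eps Heps) as [d [Hd Hclose]].
exists d; split; [exact Hd |]. intros y [_ Hyx]. simpl in *. unfold R_dist in *.
apply Hclose; [apply clamp_in; exact Hlh |].
eapply Rle_lt_trans; [apply clamp_lipschitz; exact Hlh | exact Hyx].
Qed.

Lemma bounded_above_within lo hi f :
  lo <= hi -> (forall y, Icc lo hi y -> cont_within (Icc lo hi) f y) ->
  exists M, forall y, Icc lo hi y -> f y <= M.
Proof.
intros Hlh Hf.
destruct (continuity_ab_maj (fun y => f (clamp lo hi y)) lo hi Hlh) as [m [Hm _]].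
{ intros c _. apply continuity_pt_clamp; assumption. }
exists (f (clamp lo hi m)). intros y Hy.
rewrite <- (clamp_id lo hi y Hy). exact (Hm y Hy).
Qed.

Lemma mean_value_within lo hi f df p q :
  Icc lo hi p -> Icc lo hi q ->
  (forall y, Icc lo hi y -> has_deriv_within (Icc lo hi) f y (df y)) ->
  exists c, Icc lo hi c /\ Rabs (c - p) <= Rabs (q - p) /\ f q - f p = df c * (q - p).
Proof.
intros Hp Hq Hf.
assert (Hlh : lo <= hi) by (unfold Icc in Hp; lra).
assert (Hbetween : forall y, Rmin p q <= y <= Rmax p q -> Icc lo hi y).
{ unfold Icc, Rmin, Rmax in *. intros y. destruct (Rle_dec p q); lra. }
destruct (MVT_gen (fun y => f (clamp lo hi y)) p q df) as [c [Hc Heq]].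
- intros y Hy. apply is_derive_Reals.
  assert (Hy_int : lo < y < hi).
  { unfold Icc, Rmin, Rmax in *. destruct (Rle_dec p q); lra. }
  apply (derivable_pt_lim_of_within_interior lo hi); [exact Hy_int |].
  assert (Hy_in : Icc lo hi y) by (unfold Icc; lra).
  apply (has_deriv_within_ext _ f); [exact Hy_in | | exact (Hf y Hy_in)].
  intros z Hz. rewrite clamp_id; auto.
- intros y _. apply continuity_pt_clamp; [exact Hlh |].
  intros z Hz. exact (has_deriv_within_cont _ _ _ _ (Hf z Hz)).
- exists c. split; [exact (Hbetween c Hc) |]. split.
  + revert Hc. unfold Rmin, Rmax. destruct (Rle_dec p q); intros;
      unfold Rabs; repeat destruct Rcase_abs; lra.
  + rewrite (clamp_id _ _ _ Hp), (clamp_id _ _ _ Hq) in Heq. exact Heq.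
Qed.

Lemma mean_value_bound lo hi f df p q A eps :
  Icc lo hi p -> Icc lo hi q ->
  (forall y, Icc lo hi y -> has_deriv_within (Icc lo hi) f y (df y)) ->
  (forall c, Icc lo hi c -> Rabs (c - p) <= Rabs (q - p) -> Rabs (df c - A) <= eps) ->
  Rabs (f q - f p - A * (q - p)) <= eps * Rabs (q - p).
Proof.
intros Hp Hq Hf Hdf.
destruct (mean_value_within lo hi f df p q Hp Hq Hf) as [c [Hc [Hcp Heq]]].
rewrite Heq. replace (df c * (q - p) - A * (q - p)) with ((df c - A) * (q - p)) by ring.
rewrite Rabs_mult. apply Rmult_le_compat_r; [apply Rabs_pos | auto].
Qed.

Lemma C1_rect_cont t0 t1 x0 x1 a at_ ax :
  C1_rect_with t0 t1 x0 x1 a at_ ax -> cont_on_rect t0 t1 x0 x1 a.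
Proof.
intros [_ [Hax Hd]] t x Ht Hx eps Heps.
set (L := Rabs (ax t x) + 1).
assert (HL : 0 < L) by (unfold L; pose proof (Rabs_pos (ax t x)); lra).
destruct (Hax t x Ht Hx 1 Rlt_0_1) as [d1 [Hd1 Hax1]].
destruct (has_deriv_within_cont _ _ _ _ (proj1 (Hd t x Ht Hx)) (eps / 2)) as [d2 [Hd2 Ht2]];
  [lra |].
exists (Rmin d1 (Rmin d2 (eps / (2 * L)))); split.
{ repeat apply Rmin_pos; try lra. apply Rdiv_lt_0_compat; lra. }
intros s y Hs Hy Hst Hyx.
apply Rmin_Rgt in Hst as [Hs1 Hst]. apply Rmin_Rgt in Hst as [Hs2 _].
apply Rmin_Rgt in Hyx as [Hy1 Hyx]. apply Rmin_Rgt in Hyx as [_ Hy3].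
assert (Hx_incr : Rabs (a s y - a s x - ax t x * (y - x)) <= 1 * Rabs (y - x)).
{ apply (mean_value_bound x0 x1 (a s) (ax s)); auto.
  - intros z Hz. exact (proj2 (Hd s z Hs Hz)).
  - intros c Hc Hcx. left. apply Hax1; auto. lra. }
assert (Hy_small : L * Rabs (y - x) < eps / 2).
{ replace (eps / 2) with (L * (eps / (2 * L))) by (field; lra).
  apply Rmult_lt_compat_l; lra. }
specialize (Ht2 s Hs Hs2).
replace (a s y - a t x)
  with ((a s y - a s x - ax t x * (y - x)) + ax t x * (y - x) + (a s x - a t x)) by ring.
eapply Rle_lt_trans; [apply Rabs_triang |].
eapply Rle_lt_trans; [apply Rplus_le_compat_r, Rabs_triang |].
rewrite Rabs_mult. unfold L in Hy_small. lra.
Qed.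

Lemma cont_on_rect_sub t0 t1 x0 x1 g v :
  cont_on_rect t0 t1 x0 x1 g -> (forall t, Icc t0 t1 t -> cont_within (Icc t0 t1) v t) ->
  cont_on_rect t0 t1 x0 x1 (fun s y => g s y - v s).
Proof.
intros Hg Hv t x Ht Hx eps Heps.
destruct (Hg t x Ht Hx (eps / 2)) as [d1 [Hd1 Hg1]]; [lra |].
destruct (Hv t Ht (eps / 2)) as [d2 [Hd2 Hv2]]; [lra |].
exists (Rmin d1 d2); split; [apply Rmin_pos; lra |].
intros s y Hs Hy Hst Hyx.
apply Rmin_Rgt in Hst as [Hs1 Hs2]. apply Rmin_Rgt in Hyx as [Hy1 _].
specialize (Hg1 s y Hs Hy Hs1 Hy1). specialize (Hv2 s Hs Hs2).
replace (g s y - v s - (g t x - v t)) with ((g s y - g t x) - (v s - v t)) by ring.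
eapply Rle_lt_trans; [apply Rabs_triang |]. rewrite Rabs_Ropp. lra.
Qed.

Lemma has_deriv_within_partial_t_along t0 t1 x0 x1 a at_ ax X t :
  C1_rect_with t0 t1 x0 x1 a at_ ax ->
  (forall s, Icc t0 t1 s -> Icc x0 x1 (X s)) -> Icc t0 t1 t ->
  cont_within (Icc t0 t1) X t ->
  has_deriv_within (Icc t0 t1) (fun s => a s (X s) - a t (X s)) t (at_ t (X t)).
Proof.
intros [Hat [_ Hd]] HX Ht HXc eps Heps.
destruct (Hat t (X t) Ht (HX t Ht) eps Heps) as [d1 [Hd1 Hat1]].
destruct (HXc d1 Hd1) as [d2 [Hd2 HX2]].
exists (Rmin d1 d2); split; [apply Rmin_pos; lra |].
intros s Hs Hst. apply Rmin_Rgt in Hst as [Hs1 Hs2].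
replace (a s (X s) - a t (X s) - (a t (X t) - a t (X t)) - at_ t (X t) * (s - t))
  with (a s (X s) - a t (X s) - at_ t (X t) * (s - t)) by ring.
apply (mean_value_bound t0 t1 (fun r => a r (X s)) (fun r => at_ r (X s))); auto.
- intros r Hr. exact (proj1 (Hd r (X s) Hr (HX s Hs))).
- intros c Hc Hct. left. apply Hat1; auto. lra.
Qed.

Lemma has_deriv_within_along t0 t1 x0 x1 a at_ ax X t L :
  C1_rect_with t0 t1 x0 x1 a at_ ax ->
  (forall s, Icc t0 t1 s -> Icc x0 x1 (X s)) -> Icc t0 t1 t ->
  has_deriv_within (Icc t0 t1) X t L ->
  has_deriv_within (Icc t0 t1) (fun s => a s (X s)) t (at_ t (X t) + ax t (X t) * L).
Proof.
intros HC HX Ht HL.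
apply (has_deriv_within_ext _ (fun s => (a s (X s) - a t (X s)) + a t (X s))); [exact Ht | intros; ring |].
apply has_deriv_within_plus.
- exact (has_deriv_within_partial_t_along _ _ _ _ _ _ _ _ _ HC HX Ht (has_deriv_within_cont _ _ _ _ HL)).
- apply (has_deriv_within_comp _ (Icc x0 x1)); [exact HX | | exact HL].
  destruct HC as [_ [_ Hd]]. exact (proj2 (Hd t (X t) Ht (HX t Ht))).
Qed.

Section FirstTouch.

Variables (T lo hi : R) (g gt : R -> R -> R).
Hypothesis g_cont : cont_on_rect 0 T lo hi g.

Lemma neg_tube t :
  Icc 0 T t -> (forall y, Icc lo hi y -> g t y < 0) ->
  exists d, 0 < d /\
    forall s y, Icc 0 T s -> Icc lo hi y -> Rabs (s - t) < d -> g s y < 0.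
Proof.
intros Ht Hneg.
assert (Hgauge : forall v, exists d : posreal, Icc lo hi v ->
  forall s y, Icc 0 T s -> Icc lo hi y -> Rabs (s - t) < d -> Rabs (y - v) < d -> g s y < 0).
{ intros v. destruct (classic (Icc lo hi v)) as [Hv | Hv].
  - destruct (g_cont t v Ht Hv (- g t v)) as [d [Hd Hclose]]; [specialize (Hneg v Hv); lra |].
    exists (mkposreal d Hd). intros _ s y Hs Hy Hst Hyv.
    destruct (Rabs_def2 _ _ (Hclose s y Hs Hy Hst Hyv)). lra.
  - exists (mkposreal 1 Rlt_0_1). contradiction. }
(* A Lebesgue number of this gauge on [lo, hi] is a radius that works for every [y]. *)
destruct (functional_choice _ Hgauge) as [delta Hdelta].
destruct (compactness_value_1d lo hi delta) as [d Hd].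
exists d; split; [apply cond_pos |].
intros s y Hs Hy Hst. apply Rnot_le_lt. intros Hpos.
apply (Hd y Hy). intros [v [Hv [Hyv Hdv]]].
assert (g s y < 0) by (apply (Hdelta v Hv); auto; lra).
lra.
Qed.

Lemma nonpos_of_neg_before t y :
  0 < t <= T -> Icc lo hi y -> (forall r, 0 <= r < t -> g r y < 0) -> g t y <= 0.
Proof.
intros Ht Hy Hbefore. apply Rnot_lt_le. intros Hpos.
destruct (g_cont t y ltac:(unfold Icc; lra) Hy (g t y) Hpos) as [d [Hd Hclose]].
set (r := Rmax 0 (t - d / 2)).
assert (Hr : 0 <= r /\ t - d / 2 <= r /\ r < t).
{ unfold r. repeat split; [apply Rmax_l | apply Rmax_r | apply Rmax_lub_lt; lra]. }
assert (Hrt : Rabs (r - t) < d) by (rewrite Rabs_left; lra).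
assert (Hyy : Rabs (y - y) < d) by (rewrite Rminus_diag, Rabs_R0; exact Hd).
destruct (Rabs_def2 _ _ (Hclose r y ltac:(unfold Icc; lra) Hy Hrt Hyy)).
specialize (Hbefore r ltac:(lra)). lra.
Qed.

Hypothesis g_deriv : forall t x, Icc 0 T t -> Icc lo hi x ->
  has_deriv_within (Icc 0 T) (fun s => g s x) t (gt t x).
Hypothesis g_init : forall x, Icc lo hi x -> g 0 x < 0.
Hypothesis gt_neg_at_touch : forall t x, 0 < t <= T -> Icc lo hi x ->
  g t x = 0 -> (forall y, Icc lo hi y -> g t y <= 0) -> gt t x < 0.

Lemma neg_on_rect t x : Icc 0 T t -> Icc lo hi x -> g t x < 0.
Proof.
intros Ht Hx.
set (E := fun s => 0 <= s <= T /\ forall r y, 0 <= r <= s -> Icc lo hi y -> g r y < 0).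
assert (E0 : E 0).
{ unfold E, Icc in *. split; [lra |]. intros r y Hr Hy. replace r with 0 by lra. auto. }
destruct (completeness E) as [ts [Hub Hlub]].
{ exists T. intros s [Hs _]. lra. }
{ exists 0. exact E0. }
assert (Hts : Icc 0 T ts).
{ split; [apply Hub; exact E0 | apply Hlub; intros s [Hs _]; lra]. }
assert (Hbefore : forall r y, 0 <= r < ts -> Icc lo hi y -> g r y < 0).
{ intros r y Hr Hy. apply NNPP. intros Hnot.
  assert (ts <= r); [| lra].
  apply Hlub. intros s [_ Hs]. apply Rnot_lt_le. intros Hrs.
  apply Hnot, Hs; [lra | exact Hy]. }
assert (Hat_ts : forall y, Icc lo hi y -> g ts y < 0).
{ intros y Hy.
  destruct (Req_dec ts 0) as [-> | Hts0]; [exact (g_init y Hy) |].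
  assert (Hts_pos : 0 < ts <= T) by (unfold Icc in Hts; lra).
  assert (Hle : forall z, Icc lo hi z -> g ts z <= 0).
  { intros z Hz. apply nonpos_of_neg_before; auto. }
  apply Rnot_le_lt. intros Hge.
  assert (Hzero : g ts y = 0) by (specialize (Hle y Hy); lra).
  pose proof (gt_neg_at_touch ts y Hts_pos Hy Hzero Hle) as Hgt_neg.
  assert (0 <= gt ts y); [| lra].
  apply (deriv_ge0_at_left_max 0 T (fun s => g s y) ts); [exact Hts_pos | exact (g_deriv ts y Hts Hy) |].
  intros r Hr. rewrite Hzero. left. apply Hbefore; auto. }
assert (HtsT : ts = T).
{ destruct (neg_tube ts Hts Hat_ts) as [d [Hd Htube]].
  set (s := Rmin T (ts + d / 2)).
  assert (Es : E s).
  { assert (s <= T /\ s <= ts + d / 2) by (split; [apply Rmin_l | apply Rmin_r]).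
    split; [unfold Icc in Hts; split; [apply Rmin_glb |]; lra |].
    intros r y Hr Hy. destruct (Rlt_dec r ts); [apply Hbefore; auto; lra |].
    apply Htube; [unfold Icc in *; lra | exact Hy |]. rewrite Rabs_right; lra. }
  specialize (Hub s Es).
  unfold s, Rmin in Hub. destruct (Rle_dec T (ts + d / 2)); unfold Icc in Hts; lra. }
destruct (Rlt_dec t ts) as [Hlt | Hge].
- apply Hbefore; [unfold Icc in Ht; lra | exact Hx].
- replace t with ts by (unfold Icc in Ht; lra). exact (Hat_ts x Hx).
Qed.

End FirstTouch.

Section Characteristic.

Variables (T : R) (a at_ ax : R -> R -> R) (xs : R -> R).
Hypothesis T_ge0 : 0 <= T.
Hypothesis a_C1 : C1_rect_with 0 T (- PI) PI a at_ ax.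
Hypothesis a_eq : forall t x, Icc 0 T t -> Icc (- PI) PI x ->
  at_ t x + RInt (fun y => a t y) (- PI) x * ax t x - (a t x) ^ 2
    + / PI * RInt (fun y => (a t y) ^ 2) (- PI) PI = 0.
Hypothesis a_mean : forall t, Icc 0 T t -> RInt (fun y => a t y) (- PI) PI = 0.
Hypothesis xs_in : forall t, Icc 0 T t -> Icc (- PI) PI (xs t).
Hypothesis xs_deriv : forall t, Icc 0 T t ->
  has_deriv_within (Icc 0 T) xs t (RInt (fun y => a t y) (- PI) (xs t)).

Lemma partial_t_at_max t x :
  Icc 0 T t -> Icc (- PI) PI x -> (forall y, Icc (- PI) PI y -> a t y <= a t x) ->
  at_ t x = a t x ^ 2 - / PI * RInt (fun y => (a t y) ^ 2) (- PI) PI.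
Proof.
intros Ht Hx Hmax.
assert (Htransport : RInt (fun y => a t y) (- PI) x * ax t x = 0).
{ destruct (Req_dec x (- PI)) as [-> | Hlo]; [rewrite RInt_point; apply Rmult_0_l |].
  destruct (Req_dec x PI) as [-> | Hhi]; [rewrite (a_mean t Ht); apply Rmult_0_l |].
  rewrite (deriv_eq0_at_interior_max (- PI) PI (a t) x (ax t x)); [apply Rmult_0_r | | | exact Hmax].
  - unfold Icc in Hx. lra.
  - destruct a_C1 as [_ [_ Hd]]. exact (proj2 (Hd t x Ht Hx)). }
pose proof (a_eq t x Ht Hx). lra.
Qed.

Lemma characteristic_value_deriv t :
  Icc 0 T t ->
  has_deriv_within (Icc 0 T) (fun s => a s (xs s)) t
    (a t (xs t) ^ 2 - / PI * RInt (fun y => (a t y) ^ 2) (- PI) PI).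
Proof.
intros Ht.
pose proof (has_deriv_within_along _ _ _ _ _ _ _ _ t _ a_C1 xs_in Ht (xs_deriv t Ht)) as Hchain.
pose proof (a_eq t (xs t) Ht (xs_in t Ht)) as Heq.
replace (a t (xs t) ^ 2 - / PI * RInt (fun y => (a t y) ^ 2) (- PI) PI)
  with (at_ t (xs t) + ax t (xs t) * RInt (fun y => a t y) (- PI) (xs t)) by lra.
exact Hchain.
Qed.

(* At a touching point the gap's time derivative is
   [b t * (2 * a t (xs t) + b t - K)], negative by the choice of [K]. *)
Lemma below_barrier eps :
  0 < eps < 1 -> (forall y, Icc (- PI) PI y -> a 0 y <= a 0 (xs 0)) ->
  forall t x, Icc 0 T t -> Icc (- PI) PI x -> a t x < a t (xs t) + eps.
Proof.
intros Heps Hinit.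
destruct (bounded_above_within 0 T (fun s => a s (xs s)) T_ge0) as [M HM].
{ intros s Hs. exact (has_deriv_within_cont _ _ _ _ (characteristic_value_deriv s Hs)). }
set (K := 2 * Rabs M + 1).
set (b := fun s => eps * exp (K * (s - T))).
assert (Hb : forall s, Icc 0 T s -> 0 < b s <= eps).
{ intros s Hs. unfold b. assert (HK : 0 <= K) by (unfold K; pose proof (Rabs_pos M); lra).
  split; [apply Rmult_lt_0_compat; [lra | apply exp_pos] |].
  rewrite <- (Rmult_1_r eps) at 2. apply Rmult_le_compat_l; [lra |].
  assert (HKs : K * (s - T) <= 0) by (unfold Icc in Hs; nra).
  rewrite <- exp_0. destruct HKs as [Hlt | ->]; [left; apply exp_increasing, Hlt | right; reflexivity]. }
assert (Hv : forall s, Icc 0 T s -> has_deriv_within (Icc 0 T) (fun r => a r (xs r) + b r) s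
  (a s (xs s) ^ 2 - / PI * RInt (fun y => (a s y) ^ 2) (- PI) PI + eps * (K * exp (K * (s - T))))).
{ intros s Hs. apply has_deriv_within_plus; [exact (characteristic_value_deriv s Hs) |].
  apply has_deriv_within_of_derivable_pt_lim, is_derive_Reals. unfold b.
  auto_derive; [exact I | unfold Rminus; ring]. }
assert (Hgap : forall t x, Icc 0 T t -> Icc (- PI) PI x -> a t x - (a t (xs t) + b t) < 0).
{ destruct a_C1 as [_ [_ Hd]].
  apply (neg_on_rect T (- PI) PI _ (fun s y => at_ s y -
    (a s (xs s) ^ 2 - / PI * RInt (fun y => (a s y) ^ 2) (- PI) PI + eps * (K * exp (K * (s - T)))))).
  - apply cont_on_rect_sub; [exact (C1_rect_cont _ _ _ _ _ _ _ a_C1) |].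
    intros s Hs. exact (has_deriv_within_cont _ _ _ _ (Hv s Hs)).
  - intros s y Hs Hy. apply has_deriv_within_minus; [exact (proj1 (Hd s y Hs Hy)) | exact (Hv s Hs)].
  - intros y Hy. pose proof (Hinit y Hy). pose proof (Hb 0 ltac:(unfold Icc; lra)). lra.
  - intros t x Ht Hx Htouch Hle.
    assert (Ht' : Icc 0 T t) by (unfold Icc; lra).
    rewrite (partial_t_at_max t x Ht' Hx); [| intros y Hy; pose proof (Hle y Hy); lra].
    pose proof (HM t Ht'). pose proof (Rle_abs M). pose proof (Hb t Ht').
    replace (eps * (K * exp (K * (t - T)))) with (K * b t) by (unfold b; ring).
    replace (a t x) with (a t (xs t) + b t) by lra.
    unfold K. nra. }
intros t x Ht Hx. pose proof (Hgap t x Ht Hx). pose proof (Hb t Ht). lra.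
Qed.

End Characteristic.

Theorem lemma2p3 (T : R) (a at_ ax : R -> R -> R) (x0s : R) (xs : R -> R) :
  0 < T ->
  (* a in C^1([0,T] x [-pi,pi]) with partial derivatives at_, ax *)
  C1_rect_with 0 T (- PI) PI a at_ ax ->
  (* the equation *)
  (forall t x, Icc 0 T t -> Icc (- PI) PI x ->
     at_ t x + RInt (fun y => a t y) (- PI) x * ax t x - (a t x) ^ 2
       + / PI * RInt (fun y => (a t y) ^ 2) (- PI) PI = 0) ->
  (* zero mean *)
  (forall t, Icc 0 T t -> RInt (fun y => a t y) (- PI) PI = 0) ->
  (* x0s is a maximum point of a(0, .) on [-pi,pi] *)
  Icc (- PI) PI x0s ->
  (forall x, Icc (- PI) PI x -> a 0 x <= a 0 x0s) ->
  (* xs is the characteristic starting from x0s *)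
  xs 0 = x0s ->
  (forall t, Icc 0 T t -> Icc (- PI) PI (xs t)) ->
  (forall t, Icc 0 T t ->
     has_deriv_within (Icc 0 T) xs t (RInt (fun y => a t y) (- PI) (xs t))) ->
  (* conclusion *)
  forall t, Icc 0 T t -> forall x, Icc (- PI) PI x -> a t x <= a t (xs t).
Proof.
intros HT HC Heq Hmean _ Hmax Hxs0 HXin HXd t Ht x Hx.
apply le_epsilon. intros eps Heps.
assert (Hinit : forall y, Icc (- PI) PI y -> a 0 y <= a 0 (xs 0)) by (rewrite Hxs0; exact Hmax).
assert (He : 0 < Rmin eps (1 / 2) < 1).
{ split; [apply Rmin_glb_lt; lra | eapply Rle_lt_trans; [apply Rmin_r | lra]]. }
pose proof (below_barrier T a at_ ax xs (Rlt_le _ _ HT) HC Heq Hmean HXin HXd _ He Hinit t x Ht Hx).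
pose proof (Rmin_l eps (1 / 2)). lra.
Qed.
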